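(* Let $p,q>0$ and for $x,y\in\mathbb{R}$ and $f,g\in L^p(\mathbb{R}^d)$ set $h_p(x,y)=\sqrt{(|x|^p+|y|^p)|x-y|^p}$ and $H_p(f,g)=\sqrt{(\|f\|_p^p+\|g\|_p^p)\|f-g\|_p^p}$, where $\|f\|_p^p=\int_{\mathbb{R}^d}|f|^p$. Then: (i) for all $x,y\in\mathbb{R}$, $|x-y|^p\le\max(1,2^{\frac{p-1}{2}})h_p(x,y)$ and $|x^2-y^2|^{p/2}\le\max(1,2^{\frac{p-1}{2}})h_p(x,y)$; (ii) for all $f,g\in L^p(\mathbb{R}^d)$, $\int_{\mathbb{R}^d}h_p(f(\mathbf{r}),g(\mathbf{r}))\,\mathrm{d}\mathbf{r}\le H_p(f,g)$; (iii) for all $f,g\in L^p(\mathbb{R}^d)\cap L^q(\mathbb{R}^d)$ and $\lambda\in[0,1]$, $H_{\lambda p+(1-\lambda)q}(f,g)\le\sqrt{\lambda}\,H_p(f,g)+\sqrt{1-\lambda}\,H_q(f,g)$. *)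

From HB Require Import structures.
From mathcomp Require Import all_boot all_order all_algebra.
From mathcomp Require Import all_classical all_reals all_analysis.
Set Implicit Arguments. Unset Strict Implicit. Unset Printing Implicit Defensive.
Import Order.TTheory GRing.Theory Num.Theory.
Import numFieldNormedType.Exports.
Local Open Scope classical_set_scope.
Local Open Scope ring_scope.

(* R^d is modelled as d.-tuple R, with the product (= Borel) sigma-algebra
   generated by the coordinate projections (library instance). *)

(* mu is Lebesgue measure on R^d: it gives every closed box its volume.
   (This characterizes Lebesgue measure uniquely on the Borel sets.) *)
Definition is_lebesgue_Rd (R : realType) (d : nat)
    (mu : {measure set (d.-tuple R) -> \bar R}) : Prop :=
  forall a b : d.-tuple R, (forall i, tnth a i <= tnth b i) ->
    mu [set x | forall i, tnth a i <= tnth x i <= tnth b i] =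
    (\prod_(i < d) (tnth b i - tnth a i))%:E.

Definition inLp (R : realType) (d : nat)
    (mu : {measure set (d.-tuple R) -> \bar R}) (p : R)
    (f : d.-tuple R -> R) : Prop :=
  measurable_fun setT f /\ (\int[mu]_x ((`|f x| `^ p)%:E) < +oo)%E.

Definition normpp (R : realType) (d : nat)
    (mu : {measure set (d.-tuple R) -> \bar R}) (p : R)
    (f : d.-tuple R -> R) : R :=
  fine (\int[mu]_x ((`|f x| `^ p)%:E)).

Definition hp (R : realType) (p x y : R) : R :=
  Num.sqrt ((`|x| `^ p + `|y| `^ p) * `|x - y| `^ p).

Definition Hp (R : realType) (d : nat)
    (mu : {measure set (d.-tuple R) -> \bar R}) (p : R)
    (f g : d.-tuple R -> R) : R :=
  Num.sqrt ((normpp mu p f + normpp mu p g) * normpp mu p (f \- g)).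

From HB Require Import structures.
From mathcomp Require Import all_boot all_order all_algebra.
From mathcomp Require Import all_classical all_reals all_analysis.
From mathcomp.algebra_tactics Require Import ring.
From mathcomp Require Import measurable_realfun.
Set Implicit Arguments. Unset Strict Implicit. Unset Printing Implicit Defensive.
Import Order.TTheory GRing.Theory Num.Theory.
Import numFieldNormedType.Exports.
Local Open Scope classical_set_scope.
Local Open Scope ring_scope.

(* (i) is pointwise: |x - y| and |x + y| are at most |x| + |y|, and
   (|x| + |y|)^p <= max(1, 2^(p-1)) (|x|^p + |y|^p) by convexity (p >= 1) or
   subadditivity (p <= 1) of t |-> t^p; taking square roots and multiplying by
   sqrt(|x - y|^p) gives both bounds.
   (ii) is the Cauchy-Schwarz inequality for sqrt(|f|^p + |g|^p) and
   sqrt(|f - g|^p).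
   (iii) For r = l p + (1 - l) q, Hoelder's inequality gives
   ||h||_r^r <= (||h||_p^p)^l (||h||_q^q)^(1-l) (Lyapunov), and its discrete
   form propagates this to the sum ||f||^p + ||g||^p; hence
   H_r <= H_p^l H_q^(1-l) <= l H_p + (1 - l) H_q, and t <= sqrt t on [0, 1]. *)

Section powR_inequalities.
Variable R : realType.
Implicit Types a b c l p x y u : R.

Lemma powRD_le_convex a b p : 0 <= a -> 0 <= b -> 1 <= p ->
  (a + b) `^ p <= 2 `^ (p - 1) * (a `^ p + b `^ p).
Proof.
move=> a0 b0 p1.
have half_ge0 : 0 <= 2^-1 :> R by rewrite invr_ge0 ler0n.
have half_le1 : 2^-1 <= 1 :> R by rewrite invf_le1 ?ler1n ?ltr0n.
have nonneg c : 0 <= c -> c \in (`[0, +oo[%classic : set R).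
  by move=> c0; rewrite inE /= in_itv /= andbT.
have midpoint : (2^-1 * a + (1 - 2^-1) * b) `^ p <=
                2^-1 * a `^ p + (1 - 2^-1) * b `^ p :=
  @convex_powR R p p1 (Itv01 half_ge0 half_le1) a b (nonneg a a0) (nonneg b b0).
have -> : a + b = 2 * (2^-1 * (a + b)) by field.
have half_sub : 1 - 2^-1 = 2^-1 :> R by field.
rewrite half_sub -!mulrDr in midpoint.
rewrite powRM ?mulr_ge0 ?addr_ge0 //.
rewrite -(mulr_powRB1 (ler0n R 2)) ?(lt_le_trans ltr01) //.
rewrite (mulrC 2) -mulrA ler_pM2l ?powR_gt0 //.
by have := ler_wpM2l (ler0n R 2) midpoint; rewrite mulrA divff ?pnatr_eq0 ?mul1r.
Qed.

Lemma powRD_le_subadd a b p : 0 <= a -> 0 <= b -> 0 < p -> p <= 1 ->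
  (a + b) `^ p <= a `^ p + b `^ p.
Proof.
move=> a0 b0 p0 p1.
have [->|s_neq0] := eqVneq (a + b) 0.
  by rewrite powR0 ?gt_eqF // addr_ge0 ?powR_ge0.
have s_gt0 : 0 < a + b by rewrite lt0r s_neq0 addr_ge0.
(* the share t = c/(a+b) of each summand lies in [0,1], where t <= t^p *)
have share c : 0 <= c <= a + b -> (a + b) `^ p * (c / (a + b)) <= c `^ p.
  case/andP=> c0 cs.
  have c_eq : c = (a + b) * (c / (a + b)) by field; rewrite gt_eqF.
  rewrite [in leRHS]c_eq powRM ?divr_ge0 ?(ltW s_gt0) //.
  rewrite ler_pM2l ?powR_gt0 //.
  have [->|c_neq0] := eqVneq c 0; first by rewrite mul0r powR_ge0.
  have c_gt0 : 0 < c by rewrite lt0r c_neq0.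
  by apply: ger1_powR => //; rewrite divr_gt0 //= ler_pdivrMr // mul1r.
have := lerD (share a _) (share b _).
rewrite -mulrDr -mulrDl divff ?gt_eqF // mulr1; apply.
  by rewrite a0 lerDl.
by rewrite b0 lerDr.
Qed.

Lemma powRD_le_max a b p : 0 <= a -> 0 <= b -> 0 < p ->
  (a + b) `^ p <= Num.max 1 (2 `^ (p - 1)) * (a `^ p + b `^ p).
Proof.
move=> a0 b0 p0.
have S0 : 0 <= a `^ p + b `^ p by rewrite addr_ge0 ?powR_ge0.
have [p1|p1] := leP 1 p.
  apply: le_trans (powRD_le_convex a0 b0 p1) _.
  by rewrite ler_wpM2r // le_max lexx orbT.
apply: le_trans (powRD_le_subadd a0 b0 p0 (ltW p1)) _.
by rewrite -{1}(mul1r (_ + _)) ler_wpM2r // le_max lexx.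
Qed.

Definition hp_const p : R := Num.max 1 (2 `^ ((p - 1) / 2)).

Lemma hp_const_ge1 p : 1 <= hp_const p.
Proof. by rewrite le_max lexx. Qed.

Lemma max1_powR_le_hp_const_sqr p :
  Num.max 1 (2 `^ (p - 1)) <= hp_const p ^+ 2.
Proof.
rewrite ge_max exprn_ege1 ?hp_const_ge1 //=.
have -> : 2 `^ (p - 1) = (2 `^ ((p - 1) / 2)) ^+ 2 :> R.
  by rewrite -powR_mulrn ?powR_ge0 // -powRrM mulfVK ?pnatr_eq0.
rewrite lerXn2r ?nnegrE ?powR_ge0 ?(le_trans ler01 (hp_const_ge1 p)) //.
by rewrite le_max lexx orbT.
Qed.

Lemma hpE p x y :
  hp p x y = Num.sqrt (`|x| `^ p + `|y| `^ p) * Num.sqrt (`|x - y| `^ p).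
Proof. by rewrite /hp sqrtrM // addr_ge0 ?powR_ge0. Qed.

Lemma sqrt_normr_powR_le p x y u : 0 < p -> `|u| <= `|x| + `|y| ->
  Num.sqrt (`|u| `^ p) <= hp_const p * Num.sqrt (`|x| `^ p + `|y| `^ p).
Proof.
move=> p0 u_le.
have C0 : 0 <= hp_const p := le_trans ler01 (hp_const_ge1 p).
rewrite -[hp_const p](ger0_norm C0) -[`|hp_const p|]sqrtr_sqr.
rewrite -sqrtrM ?sqr_ge0 // ler_sqrt.
  apply: le_trans (ge0_ler_powR (ltW p0) _ _ u_le) _; rewrite ?nnegrE ?addr_ge0 //.
  apply: le_trans (powRD_le_max _ _ p0) _ => //.
  by rewrite ler_wpM2r ?addr_ge0 ?powR_ge0 ?max1_powR_le_hp_const_sqr.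
by rewrite mulr_ge0 ?sqr_ge0 ?addr_ge0 ?powR_ge0.
Qed.

Lemma normB_powR_le_hp p x y : 0 < p ->
  `|x - y| `^ p <= hp_const p * hp p x y.
Proof.
move=> p0; rewrite -{1}(sqr_sqrtr (powR_ge0 `|x - y| p)) expr2 hpE mulrA.
by rewrite ler_wpM2r ?sqrtr_ge0 ?sqrt_normr_powR_le ?ler_normB.
Qed.

Lemma sqrB_powR_le_hp p x y : 0 < p ->
  `|x ^+ 2 - y ^+ 2| `^ (p / 2) <= hp_const p * hp p x y.
Proof.
move=> p0.
have sqrt_powR v : `|v| `^ (p / 2) = Num.sqrt (`|v| `^ p).
  by rewrite -powR12_sqrt ?powR_ge0 // -powRrM.
have -> : x ^+ 2 - y ^+ 2 = (x + y) * (x - y) by ring.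
rewrite normrM powRM // !sqrt_powR hpE mulrA ler_wpM2r ?sqrtr_ge0 //.
by rewrite sqrt_normr_powR_le ?ler_normD.
Qed.

Lemma powR_geo_le_lin l a b : 0 <= a -> 0 <= b -> 0 < l -> l < 1 ->
  a `^ l * b `^ (1 - l) <= l * a + (1 - l) * b.
Proof.
move=> a0 b0 l0 l1.
have [li l'i] : 0 < l^-1 /\ 0 < (1 - l)^-1 by rewrite !invr_gt0 subr_gt0.
have := conjugate_powR (powR_ge0 a l) (powR_ge0 b (1 - l)) li l'i.
rewrite !invrK subrKC => /(_ erefl).
by rewrite -!powRrM !mulfV ?gt_eqF ?subr_gt0 // !powRr1 // !(mulrC _ l) !(mulrC _ (1 - l)).
Qed.

Lemma hoelder2_interp l a1 a2 b1 b2 :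
  0 <= a1 -> 0 <= a2 -> 0 <= b1 -> 0 <= b2 -> 0 < l -> l < 1 ->
  a1 `^ l * b1 `^ (1 - l) + a2 `^ l * b2 `^ (1 - l) <=
    (a1 + a2) `^ l * (b1 + b2) `^ (1 - l).
Proof.
move=> a10 a20 b10 b20 l0 l1.
have [li l'i] : 0 < l^-1 /\ 0 < (1 - l)^-1 by rewrite !invr_gt0 subr_gt0.
have := hoelder2 (powR_ge0 a1 l) (powR_ge0 a2 l) (powR_ge0 b1 (1 - l))
  (powR_ge0 b2 (1 - l)) li l'i.
rewrite !invrK subrKC => /(_ erefl).
by rewrite -!powRrM !mulfV ?gt_eqF ?subr_gt0 // !powRr1 // addr_ge0.
Qed.

Lemma sqrt_mul_le_interp l A D P Q P' Q' :
  0 <= A -> 0 <= D -> 0 <= P -> 0 <= Q -> 0 <= P' -> 0 <= Q' ->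
  A <= P `^ l * Q `^ (1 - l) -> D <= P' `^ l * Q' `^ (1 - l) ->
  Num.sqrt (A * D) <=
    Num.sqrt (P * P') `^ l * Num.sqrt (Q * Q') `^ (1 - l).
Proof.
move=> A0 D0 P0 Q0 P'0 Q'0 A_le D_le.
apply: le_trans (_ : Num.sqrt ((P `^ l * Q `^ (1 - l)) *
                                (P' `^ l * Q' `^ (1 - l))) <= _).
  by rewrite ler_sqrt ?mulr_ge0 ?powR_ge0 // ler_pM.
rewrite mulrACA -!powRM // sqrtrM ?powR_ge0 //.
by rewrite -!powR12_sqrt ?powR_ge0 ?mulr_ge0 // !(powRAC _ 2^-1).
Qed.

Lemma powR_geo_le_sqrt_lin l a b : 0 <= a -> 0 <= b -> 0 <= l -> l <= 1 ->
  a `^ l * b `^ (1 - l) <= Num.sqrt l * a + Num.sqrt (1 - l) * b.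
Proof.
move=> a0 b0 l0 l1.
have le_sqrt t : 0 <= t <= 1 -> t <= Num.sqrt t.
  case/andP=> t0 t1; rewrite -{1}(sqr_sqrtr t0) expr2 ler_piMl ?sqrtr_ge0 //.
  by rewrite -sqrtr1 ler_sqrt.
have [->|l_neq0] := eqVneq l 0.
  by rewrite powRr0 subr0 powRr1 // sqrtr0 sqrtr1 !mul1r mul0r add0r.
have [->|l_neq1] := eqVneq l 1.
  by rewrite powRr1 // subrr powRr0 sqrtr0 sqrtr1 !mul1r mulr1 mul0r addr0.
have l_gt0 : 0 < l by rewrite lt0r l_neq0.
have l_lt1 : l < 1 by rewrite lt_neqAle l_neq1.
apply: le_trans (powR_geo_le_lin a0 b0 l_gt0 l_lt1) _.
apply: lerD; apply: ler_wpM2r => //; apply: le_sqrt.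
  by rewrite l0 l1.
by rewrite subr_ge0 l1 lerBlDr lerDl.
Qed.

End powR_inequalities.

Section hoelder_interp.
Context d (T : measurableType d) (R : realType).
Variable mu : {measure set T -> \bar R}.

Lemma measurable_normr_powR (f : T -> R) p : measurable_fun setT f ->
  measurable_fun setT (fun x => `|f x| `^ p).
Proof.
by move=> mf; apply: (measurableT_comp (measurable_powR p)); exact: measurableT_comp.
Qed.

Lemma measurable_EFin_normr_powR (f : T -> R) p : measurable_fun setT f ->
  measurable_fun setT (fun x => (`|f x| `^ p)%:E).
Proof. by move=> mf; exact/measurable_EFinP/measurable_normr_powR. Qed.

Lemma Lnorm_powR_inv (F : T -> R) a I : 0 < a -> (forall x, 0 <= F x) ->
  (\int[mu]_x (F x)%:E = I%:E)%E ->
  Lnorm mu (a^-1)%:E (EFin \o (fun x => F x `^ a)) = (I `^ a)%:E.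
Proof.
move=> a0 F0 FI; rewrite unlock /=.
under eq_integral => x _.
  rewrite /= ger0_norm ?powR_ge0 // -powRrM mulfV ?gt_eqF // powRr1 //.
  over.
by rewrite FI invrK.
Qed.

Lemma integral_powR_interp_le (F G : T -> R) a I J :
  measurable_fun setT F -> measurable_fun setT G ->
  (forall x, 0 <= F x) -> (forall x, 0 <= G x) -> 0 < a -> a < 1 ->
  (\int[mu]_x (F x)%:E = I%:E)%E -> (\int[mu]_x (G x)%:E = J%:E)%E ->
  (\int[mu]_x (F x `^ a * G x `^ (1 - a))%:E <= (I `^ a * J `^ (1 - a))%:E)%E.
Proof.
move=> mF mG F0 G0 a0 a1 FI GJ; have a'0 : 0 < 1 - a by rewrite subr_gt0.
have mFa := measurableT_comp (measurable_powR a) mF.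
have mGa := measurableT_comp (measurable_powR (1 - a)) mG.
have [ai a'i] : 0 < a^-1 /\ 0 < (1 - a)^-1 by rewrite !invr_gt0 subr_gt0.
have := hoelder mu mFa mGa ai a'i.
rewrite !invrK subrKC => /(_ erefl).
rewrite (Lnorm_powR_inv a0 F0 FI) (Lnorm_powR_inv a'0 G0 GJ) Lnorm1 -EFinM.
apply: le_trans; apply: ge0_le_integral => //.
- by move=> x _; rewrite lee_fin mulr_ge0 ?powR_ge0.
- by apply: measurableT_comp => //; exact: measurable_funM.
- by do 2 apply: measurableT_comp => //; exact: measurable_funM.
- by move=> x _ /=; rewrite lee_fin ler_norm.
Qed.

End hoelder_interp.

Section Lp_quantities.
Variables (R : realType) (d : nat) (mu : {measure set (d.-tuple R) -> \bar R}).
Implicit Types (f g h : d.-tuple R -> R) (p q l : R).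

Lemma integral_normpp p f : inLp mu p f ->
  (\int[mu]_x (`|f x| `^ p)%:E = (normpp mu p f)%:E)%E.
Proof.
case=> _ f_fin; rewrite /normpp fineK // ge0_fin_numE //.
by apply: integral_ge0 => x _; rewrite lee_fin powR_ge0.
Qed.

Lemma normpp_ge0 p f : 0 <= normpp mu p f.
Proof.
by apply: fine_ge0; apply: integral_ge0 => x _; rewrite lee_fin powR_ge0.
Qed.

Lemma inLpB p f g : 0 < p -> inLp mu p f -> inLp mu p g -> inLp mu p (f \- g).
Proof.
move=> p0 [mf f_fin] [mg g_fin]; split; first exact: measurable_funB.
have mfp := measurable_EFin_normr_powR p mf.
have mgp := measurable_EFin_normr_powR p mg.
set C := Num.max 1 (2 `^ (p - 1)).
have C0 : 0 <= C by rewrite le_max ler01.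
apply: (@le_lt_trans _ _
    (\int[mu]_x (C%:E * ((`|f x| `^ p)%:E + (`|g x| `^ p)%:E)))%E).
  apply: ge0_le_integral => //.
  - by apply/measurable_EFinP/measurable_normr_powR/measurable_funB.
  - by apply/measurable_funeM/emeasurable_funD.
  - move=> x _; rewrite -EFinD -EFinM lee_fin /=.
    apply: le_trans (powRD_le_max (normr_ge0 (f x)) (normr_ge0 (g x)) p0).
    by apply: ge0_ler_powR; rewrite ?nnegrE ?addr_ge0 ?(ltW p0) // ler_normB.
rewrite ge0_integralZl_EFin //; last 2 first.
- by move=> x _; rewrite adde_ge0.
- exact: emeasurable_funD.
rewrite ge0_integralD //.
by rewrite lte_mul_pinfty ?lee_fin // lte_add_pinfty.
Qed.

Lemma integral_hp_le_Hp p f g : 0 < p -> inLp mu p f -> inLp mu p g ->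
  (\int[mu]_r ((hp p (f r) (g r))%:E) <= (Hp mu p f g)%:E)%E.
Proof.
move=> p0 Lf Lg; have Ld := inLpB p0 Lf Lg.
case: (Lf) (Lg) (Ld) => mf _ [mg _] [md _].
have half : 1 - 2^-1 = 2^-1 :> R by field.
have geo_half (a b : R) : 0 <= a -> 0 <= b ->
    Num.sqrt (a * b) = a `^ 2^-1 * b `^ (1 - 2^-1).
  by move=> a0 b0; rewrite half -powRM // powR12_sqrt // mulr_ge0.
under eq_integral do rewrite /hp geo_half ?addr_ge0 ?powR_ge0 //.
rewrite /Hp geo_half ?addr_ge0 ?normpp_ge0 //.
apply: integral_powR_interp_le.
- by apply: measurable_funD; exact: measurable_normr_powR.
- exact: measurable_normr_powR md.
- by move=> x; rewrite addr_ge0 ?powR_ge0.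
- by move=> x; rewrite powR_ge0.
- by rewrite invr_gt0.
- by rewrite invf_lt1 ?ltr1n.
- under eq_integral do rewrite EFinD.
  rewrite ge0_integralD ?(integral_normpp Lf) ?(integral_normpp Lg) //;
    exact: measurable_EFin_normr_powR.
- exact: integral_normpp Ld.
Qed.

Lemma normpp_interp_le p q l h : 0 < p -> 0 < q -> 0 < l -> l < 1 ->
  inLp mu p h -> inLp mu q h ->
  normpp mu (l * p + (1 - l) * q) h <=
    normpp mu p h `^ l * normpp mu q h `^ (1 - l).
Proof.
move=> p0 q0 l0 l1 Lp Lq; case: (Lp) => mh _.
have powR_split x : `|h x| `^ (l * p + (1 - l) * q) =
    (`|h x| `^ p) `^ l * (`|h x| `^ q) `^ (1 - l).
  rewrite -!powRrM (mulrC p) (mulrC q) powRD //.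
  by rewrite gt_eqF // addr_gt0 // mulr_gt0 // subr_gt0.
have interp := integral_powR_interp_le (measurable_normr_powR p mh)
  (measurable_normr_powR q mh) (fun x => powR_ge0 _ _) (fun x => powR_ge0 _ _)
  l0 l1 (integral_normpp Lp) (integral_normpp Lq).
rewrite /normpp; under eq_integral do rewrite powR_split.
rewrite -lee_fin fineK // ge0_fin_numE ?(le_lt_trans interp) ?ltry //.
by apply: integral_ge0 => x _; rewrite lee_fin mulr_ge0 ?powR_ge0.
Qed.

Lemma Hp_interp_le p q f g l : 0 < p -> 0 < q ->
  inLp mu p f -> inLp mu q f -> inLp mu p g -> inLp mu q g ->
  0 <= l -> l <= 1 ->
  Hp mu (l * p + (1 - l) * q) f g <=
    Num.sqrt l * Hp mu p f g + Num.sqrt (1 - l) * Hp mu q f g.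
Proof.
move=> p0 q0 Lpf Lqf Lpg Lqg l0 l1.
have [->|l_neq0] := eqVneq l 0.
  by rewrite mul0r subr0 mul1r add0r sqrtr0 mul0r add0r sqrtr1 mul1r.
have [->|l_neq1] := eqVneq l 1.
  by rewrite mul1r subrr mul0r addr0 sqrtr1 mul1r sqrtr0 mul0r addr0.
have l_gt0 : 0 < l by rewrite lt0r l_neq0.
have l_lt1 : l < 1 by rewrite lt_neqAle l_neq1.
have interp := normpp_interp_le p0 q0 l_gt0 l_lt1.
have interp_f := interp _ Lpf Lqf; have interp_g := interp _ Lpg Lqg.
have interp_d := interp _ (inLpB p0 Lpf Lpg) (inLpB q0 Lqf Lqg).
apply: le_trans (powR_geo_le_sqrt_lin _ _ l0 l1); rewrite ?sqrtr_ge0 //.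
apply: sqrt_mul_le_interp interp_d; rewrite ?addr_ge0 ?normpp_ge0 //.
apply: le_trans (lerD interp_f interp_g) _.
by rewrite hoelder2_interp ?normpp_ge0.
Qed.

End Lp_quantities.

Theorem lemma3p11 (R : realType) (d : nat)
    (mu : {measure set (d.-tuple R) -> \bar R}) (Hmu : is_lebesgue_Rd mu)
    (p q : R) (hp0 : 0 < p) (hq0 : 0 < q) :
  (* (i) *)
  (forall x y : R,
      `|x - y| `^ p <= Num.max 1 (2 `^ ((p - 1) / 2)) * hp p x y /\
      `|x ^+ 2 - y ^+ 2| `^ (p / 2) <= Num.max 1 (2 `^ ((p - 1) / 2)) * hp p x y) /\
  (* (ii) *)
  (forall f g : d.-tuple R -> R, inLp mu p f -> inLp mu p g ->
      (\int[mu]_r ((hp p (f r) (g r))%:E) <= (Hp mu p f g)%:E)%E) /\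
  (* (iii) *)
  (forall (f g : d.-tuple R -> R) (l : R),
      inLp mu p f -> inLp mu q f -> inLp mu p g -> inLp mu q g ->
      0 <= l -> l <= 1 ->
      Hp mu (l * p + (1 - l) * q) f g <=
        Num.sqrt l * Hp mu p f g + Num.sqrt (1 - l) * Hp mu q f g).
Proof.
split; first by move=> x y; split; [exact: normB_powR_le_hp | exact: sqrB_powR_le_hp].
split; first by move=> f g; exact: integral_hp_le_Hp.
by move=> f g l; exact: Hp_interp_le.
Qed.
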